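(* Let $M\in\mathbb{T}^{n\times n}$ and $q\in\mathbb{T}^n$ be such that no column of $M$ is the all-$(-\infty)$ vector and no entry of $q$ equals $-\infty$, and let $G=(V,E)$ be the associated colored bipartite multigraph. If $F\subset E$ covers all row nodes of $G$, then the point $(w,z)=\alpha(F)$ satisfies $w\oplus M\odot z=q$.
   Context: $\mathbb{T}=\mathbb{R}\cup\{-\infty\}$, $\oplus=\max$, $\odot=+$, $(M\odot z)_i=\max_j(M_{ij}+z_j)$; convention $a-(-\infty)=+\infty$. The graph $G$ has row nodes $u_1,\dots,u_n$ and column nodes $v_1,\dots,v_n$; its edges are a blue edge $u_iv_i$ for every $i$, and a red edge $u_iv_j$ for every $i,j$ such that $q_i-M_{ij}$ is minimal among $q_k-M_{kj}$, $k\in[n]$ (these minima are finite). For $F\subset E$, $\alpha(F)=(w,z)\in\mathbb{T}^n\times\mathbb{T}^n$ where $w_i=q_i$ if the blue edge $u_iv_i$ is in $F$ and $w_i=-\infty$ otherwise, and $z_j=q_i-M_{ij}$ if some red edge $u_iv_j$ is in $F$ and $z_j=-\infty$ otherwise. $F$ covers a node if some edge of $F$ is incident to it. *)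

From HB Require Import structures.
From mathcomp Require Import all_boot all_order all_algebra.
Set Implicit Arguments. Unset Strict Implicit. Unset Printing Implicit Defensive.
Import Order.TTheory GRing.Theory Num.Theory.
Local Open Scope ring_scope.

(* Tropical semiring T = R ∪ {-oo}, encoded as [option R] with [None] = -oo. *)
Definition trop (R : realDomainType) := option R.

Definition tmax (R : realDomainType) (a b : trop R) : trop R :=
  match a, b with
  | None, _ => b
  | _, None => a
  | Some x, Some y => Some (Num.max x y)
  end.

Definition tmul (R : realDomainType) (a b : trop R) : trop R :=
  match a, b with
  | Some x, Some y => Some (x + y)
  | _, _ => None
  end.

Definition tmatvec (R : realDomainType) (n : nat)
  (M : 'I_n -> 'I_n -> trop R) (z : 'I_n -> trop R) (i : 'I_n) : trop R :=
  \big[@tmax R/None]_(j < n) tmul (M i j) (z j).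

(* Edges of the colored bipartite multigraph:
   [inl i] is the blue edge u_i v_i, [inr (i, j)] is the (potential) red edge u_i v_j. *)
Definition edge (n : nat) : finType := ('I_n + 'I_n * 'I_n)%type.
Definition blue (n : nat) (i : 'I_n) : edge n := inl i.
Definition red (n : nat) (i j : 'I_n) : edge n := inr (i, j).

(* Red-edge condition: q_i - M_ij is minimal among q_k - M_kj, k in [n],
   with the convention a - (-oo) = +oo (so entries with M_kj = -oo never
   realize the minimum, and the minimum is finite). *)
Definition is_red (R : realDomainType) (n : nat)
  (M : 'I_n -> 'I_n -> trop R) (q : 'I_n -> trop R) (i j : 'I_n) : Prop :=
  exists a m, q i = Some a /\ M i j = Some m /\
    forall k a' m', q k = Some a' -> M k j = Some m' -> a - m <= a' - m'.

Definition in_E (R : realDomainType) (n : nat)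
  (M : 'I_n -> 'I_n -> trop R) (q : 'I_n -> trop R) (e : edge n) : Prop :=
  match e with
  | inl _ => True
  | inr (i, j) => is_red M q i j
  end.

Definition covers_row (n : nat) (F : {set edge n}) (i : 'I_n) : Prop :=
  blue i \in F \/ exists j, red i j \in F.

Definition alpha_w (R : realDomainType) (n : nat) (q : 'I_n -> trop R)
  (F : {set edge n}) (i : 'I_n) : trop R :=
  if blue i \in F then q i else None.

(* z_j = q_i - M_ij for some red edge u_i v_j in F (well defined: all such
   values equal the column minimum), -oo if there is none. *)
Definition alpha_z (R : realDomainType) (n : nat)
  (M : 'I_n -> 'I_n -> trop R) (q : 'I_n -> trop R)
  (F : {set edge n}) (j : 'I_n) : trop R :=
  match [pick i | red i j \in F] with
  | Some i =>
      match q i, M i j with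
      | Some a, Some m => Some (a - m)
      | _, _ => None
      end
  | None => None
  end.

From HB Require Import structures.
From mathcomp Require Import all_boot all_order all_algebra.
Import Order.TTheory GRing.Theory Num.Theory.
Local Open Scope ring_scope.

(* A red edge u_k v_j realises the minimum z_j of the column j of q - M, so
   M_ij + z_j <= q_i for every i: every entry of M (.) z is bounded by q.
   All red edges of a column realise the same minimum, so a red edge u_i v_j
   in F gives M_ij + z_j = q_i exactly, while a blue edge u_i v_i in F gives
   w_i = q_i; as F covers u_i, one of the two attains q_i. *)

Section TropicalMax.

Context {R : realDomainType}.

Lemma tmaxA : associative (@tmax R).
Proof. by case=> [a|] [b|] [c|] //=; rewrite maxA. Qed.

Lemma tmaxC : commutative (@tmax R).
Proof. by case=> [a|] [b|] //=; rewrite maxC. Qed.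

Lemma tmax_None_l : left_id None (@tmax R).
Proof. by []. Qed.

HB.instance Definition _ := Monoid.isComLaw.Build (trop R) None (@tmax R)
  tmaxA tmaxC tmax_None_l.

Definition tle (t : trop R) (a : R) : bool :=
  if t is Some x then x <= a else true.

Lemma tmax_tle (t u : trop R) (a : R) :
  tle t a -> tle u a -> tle (tmax t u) a.
Proof. by case: t u => [x|] [y|] //=; rewrite ge_max => -> ->. Qed.

Lemma tmax_Some_tle (t : trop R) (a : R) : tle t a -> tmax (Some a) t = Some a.
Proof. by case: t => [x|] //= hx; rewrite max_l. Qed.

Lemma big_tmax_tle (I : finType) (P : pred I) (f : I -> trop R) (a : R) :
  (forall j, tle (f j) a) -> tle (\big[@tmax R/None]_(j | P j) f j) a.
Proof. by move=> hf; elim/big_ind: _ => // x y; apply: tmax_tle. Qed.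

Lemma big_tmax_eq {I : finType} {f : I -> trop R} {a : R} (j : I) :
  (forall k, tle (f k) a) -> f j = Some a -> \big[@tmax R/None]_k f k = Some a.
Proof.
move=> hf fj; rewrite (bigD1 j) //= fj.
by apply: tmax_Some_tle; apply: big_tmax_tle.
Qed.

End TropicalMax.

(* The value -oo for an infinite argument is junk: on a red edge u_k v_j both
   q_k and M_kj are finite. *)
Definition tsub {R : realDomainType} (a m : trop R) : trop R :=
  if (a, m) is (Some a, Some m) then Some (a - m) else None.

Section RedEdges.

Context {R : realDomainType} {n : nat}.
Context {M : 'I_n -> 'I_n -> trop R} {q : 'I_n -> trop R}.

Lemma red_tsub_eq {i k j : 'I_n} :
  is_red M q i j -> is_red M q k j -> tsub (q i) (M i j) = tsub (q k) (M k j).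
Proof.
move=> [a [m [qi [Mij min_i]]]] [b [m' [qk [Mkj min_k]]]].
rewrite qi Mij qk Mkj /=; congr Some.
by apply/eqP; rewrite eq_le (min_i _ _ _ qk Mkj) (min_k _ _ _ qi Mij).
Qed.

Lemma red_tmul_tsub {i j : 'I_n} :
  is_red M q i j -> tmul (M i j) (tsub (q i) (M i j)) = q i.
Proof. by move=> [a [m [-> [-> _]]]] /=; rewrite addrC subrK. Qed.

Lemma red_tmul_tsub_tle {i k j : 'I_n} {a : R} :
  is_red M q k j -> q i = Some a -> tle (tmul (M i j) (tsub (q k) (M k j))) a.
Proof.
move=> [b [m [-> [-> min_k]]]] qi; case Mij: (M i j) => [m'|] //=.
by rewrite addrC -lerBrDr (min_k _ _ _ qi Mij).
Qed.

Context {F : {set edge n}}.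
Hypothesis hF : forall e, e \in F -> in_E M q e.

Lemma alpha_zE (j : 'I_n) :
  alpha_z M q F j =
  if [pick k | red k j \in F] is Some k then tsub (q k) (M k j) else None.
Proof. by []. Qed.

Lemma alpha_z_tle {i : 'I_n} {a : R} (j : 'I_n) :
  q i = Some a -> tle (tmul (M i j) (alpha_z M q F j)) a.
Proof.
move=> qi; rewrite alpha_zE; case: pickP => [k /hF red_kj|_].
  exact: red_tmul_tsub_tle.
by case: (M i j).
Qed.

Lemma alpha_z_red {i j : 'I_n} :
  red i j \in F -> tmul (M i j) (alpha_z M q F j) = q i.
Proof.
move=> Fij; have red_ij := hF _ Fij.
rewrite alpha_zE; case: pickP => [k /hF red_kj|/(_ i)]; last by rewrite Fij.
by rewrite -(red_tsub_eq red_ij red_kj) (red_tmul_tsub red_ij).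
Qed.

Lemma tmatvec_alpha_tle {i : 'I_n} {a : R} :
  q i = Some a -> tle (tmatvec M (alpha_z M q F) i) a.
Proof. by move=> qi; apply: big_tmax_tle => j; apply: alpha_z_tle. Qed.

Lemma tmatvec_alpha_red {i j : 'I_n} :
  red i j \in F -> tmatvec M (alpha_z M q F) i = q i.
Proof.
move=> Fij; have [a [_ [qi _]]] := hF _ Fij.
rewrite qi; apply: (big_tmax_eq j) => [k|]; first exact: alpha_z_tle.
by rewrite (alpha_z_red Fij).
Qed.

End RedEdges.

(* The hypothesis [hM] only guarantees that column minima are finite; the
   red-edge condition already carries that information. *)
Theorem lemma3p1 (R : realDomainType) (n : nat)
  (M : 'I_n -> 'I_n -> trop R) (q : 'I_n -> trop R)
  (hM : forall j : 'I_n, exists i : 'I_n, M i j <> None)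
  (hq : forall i : 'I_n, q i <> None)
  (F : {set edge n})
  (hF : forall e, e \in F -> in_E M q e)
  (hcov : forall i : 'I_n, covers_row F i) :
  forall i : 'I_n, tmax (alpha_w q F i) (tmatvec M (alpha_z M q F) i) = q i.
Proof.
move=> i; case qi: (q i) => [a|]; last by have := hq i.
rewrite /alpha_w; case: ifP => [_|Fb].
  by rewrite qi; apply/tmax_Some_tle/(tmatvec_alpha_tle hF).
have [|[j Fij]] := hcov i; first by rewrite Fb.
by rewrite (tmatvec_alpha_red hF Fij).
Qed.
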